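(* Suppose all the refinements in the types of constants and in user-provided type annotations are local. If $\lfloor\Gamma\rfloor\vdash\lfloor e\rfloor:\lfloor\tau\rfloor$ in the unrefined (simply-typed) system, then $\lceil\Gamma\rceil\vdash\lceil e\rceil:\lceil\tau\rceil$ in the gradual refinement type system.
   Context: Language: base types $b\in\{\mathrm{Int},\mathrm{Bool}\}$; refinement types $\tau ::= \{v{:}b\mid p\}\mid x{:}\tau\to\tau$; expressions $e ::= c\mid\lambda x{:}\tau.e\mid x\mid e\,x\mid\mathrm{if}\ x\ \mathrm{then}\ e\ \mathrm{else}\ e\mid\mathrm{let}\ x=e\ \mathrm{in}\ e\mid\mathrm{let}\ x{:}\tau=e\ \mathrm{in}\ e$; constants have given sound types $\mathrm{ty}(c)$. Erasure $\lfloor\cdot\rfloor$: $\lfloor\{v{:}b\mid p\}\rfloor=b$, $\lfloor x{:}\tau_x\to\tau\rfloor=\lfloor\tau_x\rfloor\to\lfloor\tau\rfloor$, applied to environments pointwise and to terms on all type annotations; the unrefined judgment is standard Hindley–Milner typing. Imprecision $\lceil\cdot\rceil$: $\lceil\{v{:}b\mid p\}\rceil=\{v{:}b\mid ?\}$, $\lceil x{:}\tau_x\to\tau\rceil=x{:}\lceil\tau_x\rceil\to\lceil\tau\rceil$, pointwise on environments, on terms applied to all annotations, and a constant $c$ is replaced by a constant with the same value and type $\lceil\mathrm{ty}(c)\rceil$. A predicate is local iff for every closing substitution some value satisfies it. Gradual predicates: $p$ or $p\land ?$ with $p$ local ($?$ means $\mathrm{true}\land ?$), concretized by $\gamma(p)=\{p\}$,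 $\gamma(p\land ?)=\{p'\mid p'$ implies $p$ under all closing substitutions, $p'$ local$\}$, pointwise on types and environments. Typing rules: if $\Gamma(x)=\{v{:}b\mid\_\}$ then $\Gamma\vdash x:\{v{:}b\mid v=x\}$; if $\Gamma(x)$ is a function type then $\Gamma\vdash x:\Gamma(x)$; $\Gamma\vdash c:\mathrm{ty}(c)$; subsumption: $\Gamma\vdash e:\tau_e$, $\Gamma\vdash\tau$, $\Gamma\vdash\tau_e\preceq\tau$ give $\Gamma\vdash e:\tau$; $\Gamma,x{:}\tau_x\vdash e:\tau$ and $\Gamma\vdash x{:}\tau_x\to\tau$ give $\Gamma\vdash\lambda x{:}t.e:x{:}\tau_x\to\tau$; $\Gamma\vdash y:\tau_x$ and $\Gamma\vdash e:x{:}\tau_x\to\tau$ give $\Gamma\vdash e\,y:\tau[y/x]$; $\Gamma\vdash x:\{v{:}\mathrm{Bool}\mid\_\}$, $\Gamma,x'{:}\{v{:}\mathrm{Bool}\mid x\}\vdash e_1:\tau$, $\Gamma,x'{:}\{v{:}\mathrm{Bool}\mid\lnot x\}\vdash e_2:\tau$ ($x'$ fresh), $\Gamma\vdash\tau$ give $\Gamma\vdash\mathrm{if}\ x\ \mathrm{then}\ e_1\ \mathrm{else}\ e_2:\tau$; $\Gamma\vdash e_x:\tau_x$, $\Gamma,x{:}\tau_x\vdash e:\tau$, $\Gamma\vdash\tau$ give $\Gamma\vdash\mathrm{let}\ x=e_x\ \mathrm{in}\ e:\tau$; the annotated let is the same with annotation $\tau_x$ and additionally $\Gamma\vdash\tau_x$.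 Subtyping: functions contravariant in the argument ($\Gamma\vdash\tau_{x2}\preceq\tau_{x1}$ and $\Gamma,x{:}\tau_{x2}\vdash\tau_1\preceq\tau_2$); well-formedness of functions: $\Gamma\vdash\tau_x$ and $\Gamma,x{:}\tau_x\vdash\tau$. In the gradual system, a base subtyping $\tilde\Gamma\vdash\{v{:}b\mid\tilde p_1\}\preceq\{v{:}b\mid\tilde p_2\}$ holds iff some concretizations $\Gamma',p_1,p_2$ satisfy: for all substitutions $\theta$ of $\Gamma',v{:}b$ by values of their types, $\theta(p_1)$ true implies $\theta(p_2)$ true; a base well-formedness $\tilde\Gamma\vdash\{v{:}b\mid\tilde p\}$ holds iff some concretizations $\Gamma',p$ satisfy $\Gamma',v{:}b\vdash p:\mathrm{Bool}$. *)

From Stdlib Require Import ZArith List Bool PeanoNat.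
Import ListNotations.

Definition var := nat.

Inductive base : Type := BInt | BBool.

Definition base_eqb (b1 b2 : base) : bool :=
  match b1, b2 with
  | BInt, BInt => true
  | BBool, BBool => true
  | _, _ => false
  end.

(* PV is the refinement variable v; PVar x a free (named) program variable;
   PBV n a locally-nameless bound variable referring to the n-th enclosing
   dependent-arrow binder x in  x:tau_x -> tau. *)
Inductive pred : Type :=
| PV
| PVar (x : var)
| PBV (n : nat)
| PInt (z : Z)
| PBool (b : bool)
| PAdd (p q : pred)
| PSub (p q : pred)
| PEq (p q : pred)
| PLe (p q : pred)
| PNot (p : pred)
| PAnd (p q : pred)
| POr (p q : pred).

Inductive val : Type := VInt (z : Z) | VBool (b : bool).

Definition has_base (c : val) (b : base) : Prop :=
  match c, b with
  | VInt _, BInt => True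
  | VBool _, BBool => True
  | _, _ => False
  end.

(* Evaluation of a predicate under a substitution theta of the program
   variables and a value c for v.  Ill-typed / unbound things give None. *)
Fixpoint peval (theta : var -> val) (c : val) (p : pred) : option val :=
  match p with
  | PV => Some c
  | PVar x => Some (theta x)
  | PBV _ => None
  | PInt z => Some (VInt z)
  | PBool b => Some (VBool b)
  | PAdd p q =>
      match peval theta c p, peval theta c q with
      | Some (VInt a), Some (VInt b) => Some (VInt (a + b))
      | _, _ => None end
  | PSub p q =>
      match peval theta c p, peval theta c q with
      | Some (VInt a), Some (VInt b) => Some (VInt (a - b))
      | _, _ => None end
  | PEq p q =>
      match peval theta c p, peval theta c q with
      | Some (VInt a), Some (VInt b) => Some (VBool (Z.eqb a b))
      | Some (VBool a), Some (VBool b) => Some (VBool (Bool.eqb a b))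
      | _, _ => None end
  | PLe p q =>
      match peval theta c p, peval theta c q with
      | Some (VInt a), Some (VInt b) => Some (VBool (Z.leb a b))
      | _, _ => None end
  | PNot p =>
      match peval theta c p with
      | Some (VBool a) => Some (VBool (negb a))
      | _ => None end
  | PAnd p q =>
      match peval theta c p, peval theta c q with
      | Some (VBool a), Some (VBool b) => Some (VBool (a && b))
      | _, _ => None end
  | POr p q =>
      match peval theta c p, peval theta c q with
      | Some (VBool a), Some (VBool b) => Some (VBool (a || b))
      | _, _ => None end
  end.

Definition holds (theta : var -> val) (c : val) (p : pred) : Prop :=
  peval theta c p = Some (VBool true).

Fixpoint pfv (p : pred) : list var :=
  match p with
  | PVar x => [x]
  | PV | PBV _ | PInt _ | PBool _ => []
  | PAdd p q | PSub p q | PEq p q | PLe p q | PAnd p q | POr p q => pfv p ++ pfv q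
  | PNot p => pfv p
  end.

Fixpoint popen (k : nat) (y : var) (p : pred) : pred :=
  match p with
  | PBV n => if Nat.eqb n k then PVar y else PBV n
  | PV => PV | PVar x => PVar x | PInt z => PInt z | PBool b => PBool b
  | PAdd p q => PAdd (popen k y p) (popen k y q)
  | PSub p q => PSub (popen k y p) (popen k y q)
  | PEq p q => PEq (popen k y p) (popen k y q)
  | PLe p q => PLe (popen k y p) (popen k y q)
  | PNot p => PNot (popen k y p)
  | PAnd p q => PAnd (popen k y p) (popen k y q)
  | POr p q => POr (popen k y p) (popen k y q)
  end.

Fixpoint pclose (k : nat) (x : var) (p : pred) : pred :=
  match p with
  | PVar z => if Nat.eqb z x then PBV k else PVar z
  | PV => PV | PBV n => PBV n | PInt z => PInt z | PBool b => PBool b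
  | PAdd p q => PAdd (pclose k x p) (pclose k x q)
  | PSub p q => PSub (pclose k x p) (pclose k x q)
  | PEq p q => PEq (pclose k x p) (pclose k x q)
  | PLe p q => PLe (pclose k x p) (pclose k x q)
  | PNot p => PNot (pclose k x p)
  | PAnd p q => PAnd (pclose k x p) (pclose k x q)
  | POr p q => POr (pclose k x p) (pclose k x q)
  end.

(* An environment is a list of bindings, most recent first:
   Gamma, x:tau  is  (x, tau) :: Gamma. *)
Definition env (A : Type) := list (var * A).

Fixpoint lookup {A : Type} (G : env A) (x : var) : option A :=
  match G with
  | [] => None
  | (y, a) :: G' => if Nat.eqb x y then Some a else lookup G' x
  end.

Definition dom {A : Type} (G : env A) : list var := map fst G.

Definition emap {A B : Type} (f : A -> B) (G : env A) : env B :=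
  map (fun xa => (fst xa, f (snd xa))) G.

Inductive uty : Type :=
| UBase (b : base)
| UArr (t1 t2 : uty).

(* static refinement types  {v:b | p}  and  x:tau_x -> tau
   (locally nameless: the binder x is anonymous, occurrences are PBV) *)
Inductive sty : Type :=
| SRef (b : base) (p : pred)
| SArr (t1 t2 : sty).

(* gradual predicates:  p   or   p /\ ?  ;  ? is  true /\ ? *)
Inductive gpred : Type :=
| GExact (p : pred)
| GImprec (p : pred).

Definition gunknown : gpred := GImprec (PBool true).

Inductive gty : Type :=
| GRef (b : base) (p : gpred)
| GArr (t1 t2 : gty).

Definition gpmap (f : pred -> pred) (g : gpred) : gpred :=
  match g with GExact p => GExact (f p) | GImprec p => GImprec (f p) end.

Definition gpfv (g : gpred) : list var :=
  match g with GExact p | GImprec p => pfv p end.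

Fixpoint sopen_rec (k : nat) (y : var) (t : sty) : sty :=
  match t with
  | SRef b p => SRef b (popen k y p)
  | SArr t1 t2 => SArr (sopen_rec k y t1) (sopen_rec (S k) y t2)
  end.
Definition sopen (y : var) (t : sty) : sty := sopen_rec 0 y t.

Fixpoint gopen_rec (k : nat) (y : var) (t : gty) : gty :=
  match t with
  | GRef b p => GRef b (gpmap (popen k y) p)
  | GArr t1 t2 => GArr (gopen_rec k y t1) (gopen_rec (S k) y t2)
  end.
(* tau[y/x] for the codomain of x:tau_x -> tau *)
Definition gopen (y : var) (t : gty) : gty := gopen_rec 0 y t.

Fixpoint gclose_rec (k : nat) (x : var) (t : gty) : gty :=
  match t with
  | GRef b p => GRef b (gpmap (pclose k x) p)
  | GArr t1 t2 => GArr (gclose_rec k x t1) (gclose_rec (S k) x t2)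
  end.
(* abstracts the named variable x: turns tau into the codomain of x:_ -> tau *)
Definition gclose (x : var) (t : gty) : gty := gclose_rec 0 x t.

Fixpoint sfv (t : sty) : list var :=
  match t with SRef _ p => pfv p | SArr t1 t2 => sfv t1 ++ sfv t2 end.

Fixpoint gfv (t : gty) : list var :=
  match t with GRef _ p => gpfv p | GArr t1 t2 => gfv t1 ++ gfv t2 end.

Fixpoint serase (t : sty) : uty :=
  match t with SRef b _ => UBase b | SArr t1 t2 => UArr (serase t1) (serase t2) end.

Fixpoint gerase (t : gty) : uty :=
  match t with GRef b _ => UBase b | GArr t1 t2 => UArr (gerase t1) (gerase t2) end.

Fixpoint simprec (t : sty) : gty :=
  match t with
  | SRef b _ => GRef b gunknown
  | SArr t1 t2 => GArr (simprec t1) (simprec t2)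
  end.

(* Terms (annotation type A: sty, gty or uty; constants of type K)     *)

Inductive tm (K A : Type) : Type :=
| Cst (k : K) (a : A)
| Var (x : var)
| Lam (x : var) (a : A) (e : tm K A)
| App (e : tm K A) (y : var)
| Ite (x : var) (e1 e2 : tm K A)
| Let (x : var) (e1 e2 : tm K A)
| LetA (x : var) (a : A) (e1 e2 : tm K A).

Arguments Cst {K A}. Arguments Var {K A}. Arguments Lam {K A}.
Arguments App {K A}. Arguments Ite {K A}. Arguments Let {K A}.
Arguments LetA {K A}.

Fixpoint tmap {K A B : Type} (f : A -> B) (e : tm K A) : tm K B :=
  match e with
  | Cst k a => Cst k (f a)
  | Var x => Var x
  | Lam x a e => Lam x (f a) (tmap f e)
  | App e y => App (tmap f e) y
  | Ite x e1 e2 => Ite x (tmap f e1) (tmap f e2)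
  | Let x e1 e2 => Let x (tmap f e1) (tmap f e2)
  | LetA x a e1 e2 => LetA x (f a) (tmap f e1) (tmap f e2)
  end.

Fixpoint gtm_vars {K : Type} (e : tm K gty) : list var :=
  match e with
  | Cst _ a => gfv a
  | Var x => [x]
  | Lam x a e => x :: gfv a ++ gtm_vars e
  | App e y => y :: gtm_vars e
  | Ite x e1 e2 => x :: gtm_vars e1 ++ gtm_vars e2
  | Let x e1 e2 => x :: gtm_vars e1 ++ gtm_vars e2
  | LetA x a e1 e2 => x :: gfv a ++ gtm_vars e1 ++ gtm_vars e2
  end.

Inductive utyping {K : Type} : env uty -> tm K uty -> uty -> Prop :=
| UT_Var G x t :
    lookup G x = Some t -> utyping G (Var x) t
| UT_Cst G k t :
    utyping G (Cst k t) t
| UT_Lam G x t e t' :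
    utyping ((x, t) :: G) e t' -> utyping G (Lam x t e) (UArr t t')
| UT_App G e y t t' :
    utyping G e (UArr t t') -> lookup G y = Some t -> utyping G (App e y) t'
| UT_If G x e1 e2 t :
    lookup G x = Some (UBase BBool) ->
    utyping G e1 t -> utyping G e2 t -> utyping G (Ite x e1 e2) t
| UT_Let G x e1 e2 t1 t :
    utyping G e1 t1 -> utyping ((x, t1) :: G) e2 t -> utyping G (Let x e1 e2) t
| UT_LetA G x t1 e1 e2 t :
    utyping G e1 t1 -> utyping ((x, t1) :: G) e2 t -> utyping G (LetA x t1 e1 e2) t.

Fixpoint ptype (D : env uty) (b : base) (p : pred) : option base :=
  match p with
  | PV => Some b
  | PVar x => match lookup D x with Some (UBase b') => Some b' | _ => None end
  | PBV _ => None
  | PInt _ => Some BInt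
  | PBool _ => Some BBool
  | PAdd p q | PSub p q =>
      match ptype D b p, ptype D b q with
      | Some BInt, Some BInt => Some BInt | _, _ => None end
  | PEq p q =>
      match ptype D b p, ptype D b q with
      | Some b1, Some b2 => if base_eqb b1 b2 then Some BBool else None
      | _, _ => None end
  | PLe p q =>
      match ptype D b p, ptype D b q with
      | Some BInt, Some BInt => Some BBool | _, _ => None end
  | PNot p =>
      match ptype D b p with Some BBool => Some BBool | _ => None end
  | PAnd p q | POr p q =>
      match ptype D b p, ptype D b q with
      | Some BBool, Some BBool => Some BBool | _, _ => None end
  end.

Definition closing (D : env uty) (theta : var -> val) : Prop :=
  forall x b, lookup D x = Some (UBase b) -> has_base (theta x) b.

Definition local (D : env uty) (b : base) (p : pred) : Prop :=
  forall theta, closing D theta -> exists c, has_base c b /\ holds theta c p.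

Definition pimplies (D : env uty) (b : base) (p' p : pred) : Prop :=
  forall theta c, closing D theta -> has_base c b -> holds theta c p' -> holds theta c p.

Definition conc_pred (D : env uty) (b : base) (g : gpred) (p' : pred) : Prop :=
  match g with
  | GExact p => p' = p
  | GImprec p => pimplies D b p' p /\ local D b p'
  end.

Inductive conc_ty : env uty -> gty -> sty -> Prop :=
| CT_Ref D b g p :
    conc_pred D b g p -> conc_ty D (GRef b g) (SRef b p)
| CT_Arr D g1 g2 s1 s2 x :
    conc_ty D g1 s1 ->
    ~ In x (dom D) -> ~ In x (gfv g2) -> ~ In x (sfv s2) ->
    conc_ty ((x, gerase g1) :: D) (gopen x g2) (sopen x s2) ->
    conc_ty D (GArr g1 g2) (SArr s1 s2).

(* Gamma' in gamma(Gamma), pointwise (each binding in its own scope) *)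
Fixpoint conc_env (G : env gty) (G' : env sty) : Prop :=
  match G, G' with
  | [], [] => True
  | (x, g) :: G0, (x', s) :: G0' =>
      x = x' /\ conc_ty (emap gerase G0) g s /\ conc_env G0 G0'
  | _, _ => False
  end.

(* theta substitutes the variables of Gamma by values of their types
   (only base-typed bindings constrain theta; bindings are interpreted
   sequentially, so later bindings shadow earlier ones) *)
Fixpoint env_sat (G : env sty) (theta : var -> val) : Prop :=
  match G with
  | [] => True
  | (x, SRef b p) :: G0 =>
      has_base (theta x) b /\
      exists theta0, env_sat G0 theta0 /\
        (forall u, u <> x -> theta0 u = theta u) /\ holds theta0 (theta x) p
  | (x, SArr _ _) :: G0 =>
      exists theta0, env_sat G0 theta0 /\ (forall u, u <> x -> theta0 u = theta u)
  end.

Inductive gsub : env gty -> gty -> gty -> Prop :=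
| GS_Ref G b p1 p2 G' q1 q2 :
    conc_env G G' ->
    conc_pred (emap gerase G) b p1 q1 ->
    conc_pred (emap gerase G) b p2 q2 ->
    (forall theta c, env_sat G' theta -> has_base c b ->
        holds theta c q1 -> holds theta c q2) ->
    gsub G (GRef b p1) (GRef b p2)
| GS_Arr G s1 t1 s2 t2 x :
    gsub G s2 s1 ->
    ~ In x (dom G) -> ~ In x (gfv t1) -> ~ In x (gfv t2) ->
    gsub ((x, s2) :: G) (gopen x t1) (gopen x t2) ->
    gsub G (GArr s1 t1) (GArr s2 t2).

Inductive gwf : env gty -> gty -> Prop :=
| GW_Ref G b p G' q :
    conc_env G G' ->
    conc_pred (emap gerase G) b p q ->
    ptype (emap serase G') b q = Some BBool ->
    gwf G (GRef b p)
| GW_Arr G s t x :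
    gwf G s ->
    ~ In x (dom G) -> ~ In x (gfv t) ->
    gwf ((x, s) :: G) (gopen x t) ->
    gwf G (GArr s t).

Inductive gtyping {K : Type} : env gty -> tm K gty -> gty -> Prop :=
| GT_VarB G x b p :
    lookup G x = Some (GRef b p) ->
    gtyping G (Var x) (GRef b (GExact (PEq PV (PVar x))))
| GT_VarF G x t1 t2 :
    lookup G x = Some (GArr t1 t2) ->
    gtyping G (Var x) (GArr t1 t2)
| GT_Cst G k t :
    gtyping G (Cst k t) t
| GT_Sub G e te t :
    gtyping G e te -> gwf G t -> gsub G te t -> gtyping G e t
| GT_Lam G x tx e t :
    gtyping ((x, tx) :: G) e t ->
    gwf G (GArr tx (gclose x t)) ->
    gtyping G (Lam x tx e) (GArr tx (gclose x t))
| GT_App G e y tx t :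
    gtyping G (Var y) tx ->
    gtyping G e (GArr tx t) ->
    gtyping G (App e y) (gopen y t)
| GT_If G x p e1 e2 t x' :
    gtyping G (Var x) (GRef BBool p) ->
    ~ In x' (dom G) -> ~ In x' (gtm_vars e1) -> ~ In x' (gtm_vars e2) ->
    ~ In x' (gfv t) ->
    gtyping ((x', GRef BBool (GExact (PVar x))) :: G) e1 t ->
    gtyping ((x', GRef BBool (GExact (PNot (PVar x)))) :: G) e2 t ->
    gwf G t ->
    gtyping G (Ite x e1 e2) t
| GT_Let G x e1 e2 tx t :
    gtyping G e1 tx ->
    gtyping ((x, tx) :: G) e2 t ->
    gwf G t ->
    gtyping G (Let x e1 e2) t
| GT_LetA G x tx e1 e2 t :
    gwf G tx ->
    gtyping G e1 tx ->
    gtyping ((x, tx) :: G) e2 t ->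
    gwf G t ->
    gtyping G (LetA x tx e1 e2) t.

Inductive local_sty : env uty -> sty -> Prop :=
| LS_Ref D b p : local D b p -> local_sty D (SRef b p)
| LS_Arr D s1 s2 x :
    local_sty D s1 ->
    ~ In x (dom D) -> ~ In x (sfv s2) ->
    local_sty ((x, serase s1) :: D) (sopen x s2) ->
    local_sty D (SArr s1 s2).

(* all refinements in the types of constants and in the type annotations of
   e are local; D is the (unrefined) scope at that point of e *)
Fixpoint all_local {K : Type} (D : env uty) (e : tm K sty) : Prop :=
  match e with
  | Cst _ t => local_sty [] t
  | Var _ => True
  | Lam x t e => local_sty D t /\ all_local ((x, serase t) :: D) e
  | App e _ => all_local D e
  | Ite _ e1 e2 => all_local D e1 /\ all_local D e2
  | Let x e1 e2 =>
      all_local D e1 /\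
      forall t1, utyping D (tmap serase e1) t1 -> all_local ((x, t1) :: D) e2
  | LetA x t e1 e2 =>
      local_sty D t /\ all_local D e1 /\ all_local ((x, serase t) :: D) e2
  end.

(* Read every simple type as the gradual type with [?] in every refinement
   and induct on the simple typing derivation.  Since [?] concretizes to the
   local predicate [true], these gradual types are always well formed, which
   covers the side conditions of the gradual rules.  A variable of base type
   only gets its singleton type [{v:b | v = x}], which subsumption weakens to
   [{v:b | ?}].  The branches of an [if] extend the environment with fresh
   exact bindings that have no simply typed counterpart, so the invariant
   relating the two environments only asks that every simply typed binding
   be matched. *)
From Stdlib Require Import ZArith List PeanoNat Lia.
Import ListNotations.

Definition fresh (l : list var) : var := S (list_max l).

Lemma fresh_notin (l : list var) : ~ In (fresh l) l.
Proof.
  intros Hin.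
  assert (Hmax : Forall (fun k => k <= list_max l) l) by now apply list_max_le.
  rewrite Forall_forall in Hmax. specialize (Hmax _ Hin).
  unfold fresh in Hmax. lia.
Qed.

Lemma lookup_in_dom {A : Type} (G : env A) (y : var) (a : A) :
  lookup G y = Some a -> In y (dom G).
Proof.
  induction G as [|[z a'] G IH]; simpl; intros H; [discriminate|].
  destruct (Nat.eqb_spec y z); subst; auto.
Qed.

Fixpoint unknown_ty (T : uty) : gty :=
  match T with
  | UBase b => GRef b gunknown
  | UArr T1 T2 => GArr (unknown_ty T1) (unknown_ty T2)
  end.

Fixpoint trivial_ty (T : uty) : sty :=
  match T with
  | UBase b => SRef b (PBool true)
  | UArr T1 T2 => SArr (trivial_ty T1) (trivial_ty T2)
  end.

Lemma simprec_unknown (s : sty) : simprec s = unknown_ty (serase s).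
Proof. induction s; simpl; congruence. Qed.

Lemma tmap_simprec {K : Type} (e : tm K sty) :
  tmap simprec e = tmap unknown_ty (tmap serase e).
Proof. induction e; simpl; rewrite ?simprec_unknown; congruence. Qed.

Lemma emap_simprec (G : env sty) :
  emap simprec G = emap unknown_ty (emap serase G).
Proof.
  unfold emap. rewrite map_map. apply map_ext.
  intros [x s]. simpl. now rewrite simprec_unknown.
Qed.

Lemma gfv_unknown (T : uty) : gfv (unknown_ty T) = [].
Proof. induction T; simpl; auto. now rewrite IHT1, IHT2. Qed.

Lemma gopen_rec_unknown (T : uty) (k : nat) (y : var) :
  gopen_rec k y (unknown_ty T) = unknown_ty T.
Proof. revert k; induction T; simpl; intros k; auto. now rewrite IHT1, IHT2. Qed.

Lemma gclose_rec_unknown (T : uty) (k : nat) (x : var) :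
  gclose_rec k x (unknown_ty T) = unknown_ty T.
Proof. revert k; induction T; simpl; intros k; auto. now rewrite IHT1, IHT2. Qed.

Lemma sfv_trivial (T : uty) : sfv (trivial_ty T) = [].
Proof. induction T; simpl; auto. now rewrite IHT1, IHT2. Qed.

Lemma sopen_rec_trivial (T : uty) (k : nat) (y : var) :
  sopen_rec k y (trivial_ty T) = trivial_ty T.
Proof. revert k; induction T; simpl; intros k; auto. now rewrite IHT1, IHT2. Qed.

Lemma local_true (D : env uty) (b : base) : local D b (PBool true).
Proof.
  intros theta _.
  destruct b; [exists (VInt 0%Z) | exists (VBool true)]; split; easy.
Qed.

Lemma conc_pred_unknown (D : env uty) (b : base) :
  conc_pred D b gunknown (PBool true).
Proof. split; [easy | apply local_true]. Qed.

Lemma conc_ty_unknown (D : env uty) (T : uty) :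
  conc_ty D (unknown_ty T) (trivial_ty T).
Proof.
  revert D; induction T as [b|T1 IH1 T2 IH2]; intros D; simpl.
  - constructor. apply conc_pred_unknown.
  - apply CT_Arr with (x := fresh (dom D)); auto.
    + apply fresh_notin.
    + now rewrite gfv_unknown.
    + now rewrite sfv_trivial.
    + unfold gopen, sopen. rewrite gopen_rec_unknown, sopen_rec_trivial. apply IH2.
Qed.

Definition concretizable (G : env gty) : Prop := exists G', conc_env G G'.

Lemma concretizable_cons_unknown (G : env gty) (x : var) (T : uty) :
  concretizable G -> concretizable ((x, unknown_ty T) :: G).
Proof.
  intros [G' HG]. exists ((x, trivial_ty T) :: G').
  repeat split; auto. apply conc_ty_unknown.
Qed.

Lemma concretizable_cons_exact (G : env gty) (x : var) (b : base) (p : pred) :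
  concretizable G -> concretizable ((x, GRef b (GExact p)) :: G).
Proof.
  intros [G' HG]. exists ((x, SRef b p) :: G').
  repeat split; auto. now constructor.
Qed.

Lemma concretizable_unknown_env (D : env uty) :
  concretizable (emap unknown_ty D).
Proof.
  exists (emap trivial_ty D).
  induction D as [|[x T] D IH]; simpl; auto.
  repeat split; auto. apply conc_ty_unknown.
Qed.

Lemma gwf_unknown (G : env gty) (T : uty) :
  concretizable G -> gwf G (unknown_ty T).
Proof.
  revert G; induction T as [b|T1 IH1 T2 IH2]; intros G HG; simpl.
  - destruct HG as [G' HG'].
    apply GW_Ref with (G' := G') (q := PBool true); auto.
    apply conc_pred_unknown.
  - apply GW_Arr with (x := fresh (dom G)); auto.
    + apply fresh_notin.
    + now rewrite gfv_unknown.
    + unfold gopen. rewrite gopen_rec_unknown.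
      apply IH2, concretizable_cons_unknown, HG.
Qed.

Lemma gsub_unknown_r (G : env gty) (b : base) (g : gpred) (q : pred) :
  concretizable G -> conc_pred (emap gerase G) b g q ->
  gsub G (GRef b g) (GRef b gunknown).
Proof.
  intros [G' HG] Hq.
  apply GS_Ref with (G' := G') (q1 := q) (q2 := PBool true); auto.
  - apply conc_pred_unknown.
  - intros; reflexivity.
Qed.

Definition lifts_binding (T : uty) (g : gty) : Prop :=
  match T with
  | UBase b => exists p, g = GRef b p
  | UArr _ _ => g = unknown_ty T
  end.

Definition lifts_env (D : env uty) (G : env gty) : Prop :=
  forall y T, lookup D y = Some T ->
    exists g, lookup G y = Some g /\ lifts_binding T g.

Lemma lifts_binding_unknown (T : uty) : lifts_binding T (unknown_ty T).
Proof. destruct T; simpl; eauto. Qed.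

Lemma lifts_env_unknown (D : env uty) : lifts_env D (emap unknown_ty D).
Proof.
  induction D as [|[x T] D IH]; intros y U H; simpl in *; [discriminate|].
  destruct (Nat.eqb y x).
  - injection H as ->. exists (unknown_ty U). split; auto.
    apply lifts_binding_unknown.
  - now apply IH.
Qed.

Lemma lifts_env_cons (D : env uty) (G : env gty) (x : var) (T : uty) :
  lifts_env D G -> lifts_env ((x, T) :: D) ((x, unknown_ty T) :: G).
Proof.
  intros HDG y U H. simpl in *. destruct (Nat.eqb y x).
  - injection H as ->. exists (unknown_ty U). split; auto.
    apply lifts_binding_unknown.
  - now apply HDG.
Qed.

Lemma lifts_env_fresh (D : env uty) (G : env gty) (x : var) (g : gty) :
  lifts_env D G -> ~ In x (dom G) -> lifts_env D ((x, g) :: G).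
Proof.
  intros HDG Hx y U H. destruct (HDG _ _ H) as [g0 [Hg0 Hlift]]. simpl.
  destruct (Nat.eqb_spec y x) as [->|]; eauto.
  exfalso. eapply Hx, lookup_in_dom, Hg0.
Qed.

Lemma gtyping_var_base {K : Type} (G : env gty) (y : var) (b : base) (p : gpred) :
  concretizable G -> lookup G y = Some (GRef b p) ->
  @gtyping K G (Var y) (GRef b gunknown).
Proof.
  intros HG Hy. apply GT_Sub with (te := GRef b (GExact (PEq PV (PVar y)))).
  - eapply GT_VarB, Hy.
  - apply (gwf_unknown G (UBase b)), HG.
  - eapply gsub_unknown_r; [exact HG | reflexivity].
Qed.

Lemma gtyping_var_unknown {K : Type} (D : env uty) (G : env gty) (y : var) (T : uty) :
  lifts_env D G -> concretizable G -> lookup D y = Some T ->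
  @gtyping K G (Var y) (unknown_ty T).
Proof.
  intros HDG HG Hy. destruct (HDG _ _ Hy) as [g [Hg Hlift]].
  destruct T; simpl in Hlift.
  - destruct Hlift as [p ->]. eapply gtyping_var_base; eauto.
  - subst g. now apply GT_VarF.
Qed.

Lemma gtyping_unknown_of_utyping {K : Type} (e : tm K uty) :
  forall D G T, utyping D e T -> lifts_env D G -> concretizable G ->
  gtyping G (tmap unknown_ty e) (unknown_ty T).
Proof.
  induction e as [k a|y|x a e IH|e IH y|x e1 IH1 e2 IH2|x e1 IH1 e2 IH2
                 |x a e1 IH1 e2 IH2];
    intros D G T Hu HDG HG; inversion Hu; subst; simpl.
  - apply GT_Cst.
  - eapply gtyping_var_unknown; eauto.
  - rewrite <- (gclose_rec_unknown t' 0 x). apply GT_Lam.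
    + eapply IH; eauto using lifts_env_cons, concretizable_cons_unknown.
    + unfold gclose. rewrite gclose_rec_unknown.
      apply (gwf_unknown G (UArr a t')), HG.
  - rewrite <- (gopen_rec_unknown T 0 y). eapply GT_App.
    + eapply gtyping_var_unknown; eauto.
    + exact (IH D G (UArr t T) H2 HDG HG).
  - set (vars := dom G ++ gtm_vars (tmap unknown_ty e1)
                       ++ gtm_vars (tmap unknown_ty e2)).
    assert (Hfresh := fresh_notin vars).
    unfold vars in Hfresh. rewrite !in_app_iff in Hfresh.
    destruct (HDG _ _ H3) as [g [Hg [p ->]]].
    apply GT_If with (p := GExact (PEq PV (PVar x))) (x' := fresh vars);
      try tauto.
    + eapply GT_VarB, Hg.
    + now rewrite gfv_unknown.
    + eapply IH1; eauto using concretizable_cons_exact.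
      apply lifts_env_fresh; tauto.
    + eapply IH2; eauto using concretizable_cons_exact.
      apply lifts_env_fresh; tauto.
    + apply gwf_unknown, HG.
  - apply GT_Let with (tx := unknown_ty t1).
    + eapply IH1; eauto.
    + eapply IH2; eauto using lifts_env_cons, concretizable_cons_unknown.
    + apply gwf_unknown, HG.
  - apply GT_LetA.
    + apply gwf_unknown, HG.
    + eapply IH1; eauto.
    + eapply IH2; eauto using lifts_env_cons, concretizable_cons_unknown.
    + apply gwf_unknown, HG.
Qed.

Theorem mainTheorem7 (K : Type) (G : env sty) (e : tm K sty) (t : sty) :
  all_local (emap serase G) e ->
  utyping (emap serase G) (tmap serase e) (serase t) ->
  gtyping (emap simprec G) (tmap simprec e) (simprec t).
Proof.
  intros _ Hu.
  rewrite simprec_unknown, tmap_simprec, emap_simprec.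
  eapply gtyping_unknown_of_utyping; eauto.
  - apply lifts_env_unknown.
  - apply concretizable_unknown_env.
Qed.
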